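(* Let $c_0,c_1$ be convex loops with length measures $\mu_0,\mu_1$, and suppose that for some $j\in\{0,1\}$ the loop $c_j$ is degenerate with $\mu_j=r\delta_{x_j}+r\delta_{-x_j}$ ($r>0$, $x_j\in S^1$). Let $i$ be the other index. Then $\mu_0,\mu_1$ are weakly admissible if and only if $\mu_i(\{\pm\,\mathrm{i}x_j\})=0$.
   Context: $S^1$ is the unit circle in $\mathbb{C}$ (identified with $\mathbb{R}/2\pi\mathbb{Z}$, arc-length measure $\mathrm{d}s$, geodesic distance $\operatorname{dist}$ with values in $[0,\pi]$). A convex loop is $c\in W^{1,1}(S^1,\mathbb{C})$ with $c'\neq0$ a.e. whose image is the boundary of a convex set in $\mathbb{C}$, positively oriented; its length measure is $\mu_c:=(T_c)_\#(|c'|\,\mathrm{d}s)$, $T_c=c'/|c'|$. Degenerate means $\mu_c=r\delta_x+r\delta_{-x}$ for some $r>0$, $x\in S^1$. Two measures $\mu_0,\mu_1\in\mathcal{M}_+(S^1)$ are weakly admissible if $\mu_i(\{x\in S^1:\operatorname{dist}(x,\operatorname{supp}\mu_j)\ge\pi/2\})=0$ for $\{i,j\}=\{0,1\}$. *)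

(* The plane C is modelled as R * R (pairs),
   multiplication by the imaginary unit i being (a,b) |-> (-b,a). *)
From HB Require Import structures.
From mathcomp Require Import all_boot all_order all_algebra.
From mathcomp Require Import all_classical all_reals all_analysis.
Set Implicit Arguments. Unset Strict Implicit. Unset Printing Implicit Defensive.
Import Order.TTheory GRing.Theory Num.Theory.
Import numFieldNormedType.Exports.
Local Open Scope classical_set_scope.
Local Open Scope ring_scope.

Section Defs.
Variable R : realType.
Notation pt := (R * R)%type.

Definition padd (p q : pt) : pt := (p.1 + q.1, p.2 + q.2).
Definition psub (p q : pt) : pt := (p.1 - q.1, p.2 - q.2).
Definition pscale (l : R) (p : pt) : pt := (l * p.1, l * p.2).
Definition pneg (p : pt) : pt := (- p.1, - p.2).
Definition pmul_i (p : pt) : pt := (- p.2, p.1).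
Definition pdot (p q : pt) : R := p.1 * q.1 + p.2 * q.2.
Definition pcross (p q : pt) : R := p.1 * q.2 - p.2 * q.1.
Definition pnorm (p : pt) : R := Num.sqrt (pdot p p).

Definition period : set R := `[0, 2 * pi]%classic.

Definition S1 : set pt := [set x | pdot x x = 1].
Definition gdist (x y : pt) : R := acos (pdot x y).

(* W^{1,1} loop on S^1 = R/2piZ: c is 2pi-periodic and absolutely continuous
   with (weak) derivative g, g integrable on a period:
   c t = c 0 + \int_0^t g  for t in [0, 2pi]. *)
Definition W11_loop (c g : R -> pt) : Prop :=
  (forall t, c (t + 2 * pi) = c t) /\
  (forall t, g (t + 2 * pi) = g t) /\
  lebesgue_measure.-integrable period (fun s => ((g s).1)%:E) /\
  lebesgue_measure.-integrable period (fun s => ((g s).2)%:E) /\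
  (forall t, 0 <= t <= 2 * pi ->
     c t = padd (c 0)
       (\int[lebesgue_measure]_(s in `[0, t]%classic) (g s).1,
        \int[lebesgue_measure]_(s in `[0, t]%classic) (g s).2)).

Definition convex_set (K : set pt) : Prop :=
  forall p q l, K p -> K q -> 0 <= l <= 1 ->
    K (padd (pscale l p) (pscale (1 - l) q)).

(* convex loop (c with derivative g): c' <> 0 a.e., the image of c is the
   boundary of a convex set K, positively oriented (K lies to the left of
   the tangent vector c' at a.e. parameter). *)
Definition convex_loop (c g : R -> pt) : Prop :=
  W11_loop c g /\
  (\forall s \ae lebesgue_measure, g s != (0, 0)) /\
  exists K : set pt, convex_set K /\
    range c = closure K `\` interior K /\
    (\forall s \ae lebesgue_measure, forall p, K p -> 0 <= pcross (g s) (psub p (c s))).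

Definition unit_tangent (g : R -> pt) (s : R) : pt := pscale (pnorm (g s))^-1 (g s).

(* length measure mu_c = (T_c)_# (|c'| ds), evaluated on a set A of points of C *)
Definition length_measure (g : R -> pt) (A : set pt) : \bar R :=
  (\int[lebesgue_measure]_(s in period)
     ((\1_A (unit_tangent g s) : R) * pnorm (g s))%:E)%E.

(* measures on S^1 are represented as set functions on subsets of C *)
Definition supp (mu : set pt -> \bar R) : set pt :=
  [set x | S1 x /\ forall e : R, 0 < e -> (0 < mu [set y | S1 y /\ (gdist x y < e)%R])%E].

Definition weakly_admissible (mu0 mu1 : set pt -> \bar R) : Prop :=
  mu0 [set x | S1 x /\ forall y, supp mu1 y -> pi / 2 <= gdist x y] = 0%E /\
  mu1 [set x | S1 x /\ forall y, supp mu0 y -> pi / 2 <= gdist x y] = 0%E.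

Definition is_degenerate_measure (mu : set pt -> \bar R) (r : R) (x : pt) : Prop :=
  forall A : set pt, measurable A ->
    mu A = ((r * \1_A x + r * \1_A (pneg x) : R)%:E).

End Defs.

From HB Require Import structures.
From mathcomp Require Import all_boot all_order all_algebra.
From mathcomp Require Import all_classical all_reals all_analysis.
From mathcomp Require Import ring lra.
From mathcomp Require Import measurable_realfun.
Import Order.TTheory GRing.Theory Num.Theory.
Set Implicit Arguments. Unset Strict Implicit. Unset Printing Implicit Defensive.
Local Open Scope classical_set_scope.
Local Open Scope ring_scope.

(* The support of the degenerate measure mu_j = r delta_x + r delta_(-x) is {x, -x}, so
   the points at distance >= pi/2 from it are exactly +-ix; one half of weak
   admissibility is therefore mu_i({+-ix}) = 0.  The other half asks that mu_j, which
   lives on +-x, does not charge the points at distance >= pi/2 from supp mu_i, i.e.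
   that supp mu_i meets both open half-circles <y, x> > 0 and <y, -x> > 0.  This
   follows from mu_i({+-iv}) = 0 for v = +-x: the loop c_i is closed, so
   int <c_i', v> ds = 0; the tangent cannot be a.e. orthogonal to v (that would put
   all of mu_i on +-iv), hence <c_i', v> >= d |c_i'| with d > 0 on a set of positive
   measure.  On that set the unit tangent stays in a closed arc of the open
   half-circle around v, and an essential value of its iv-coordinate gives a point
   of supp mu_i on that arc. *)

Section UnitCircle.
Variable R : realType.
Implicit Types x y u v w : (R * R)%type.

Lemma S1N x : S1 x -> S1 (pneg x).
Proof. by rewrite /S1 /pdot /= !mulrNN. Qed.

Lemma S1_mul_i x : S1 x -> S1 (pmul_i x).
Proof. by rewrite /S1 /pdot /= mulrNN addrC. Qed.

Lemma pdotC x y : pdot x y = pdot y x.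
Proof. by rewrite /pdot mulrC [x.2 * _]mulrC. Qed.

Lemma pdotN x y : pdot x (pneg y) = - pdot x y.
Proof. by rewrite /pdot /=; ring. Qed.

Lemma pdot_mul_i x : pdot (pmul_i x) x = 0.
Proof. by rewrite /pdot /=; ring. Qed.

Lemma pdot_pcross_sqr x y :
  pdot x y ^+ 2 + pcross x y ^+ 2 = pdot x x * pdot y y.
Proof. by rewrite /pdot /pcross; ring. Qed.

Lemma pdot_S1_itv x y : S1 x -> S1 y -> -1 <= pdot x y <= 1.
Proof.
move=> Sx Sy; have := pdot_pcross_sqr x y; rewrite Sx Sy mulr1 => h.
have := sqr_ge0 (pcross x y) => h2; apply/andP; split; nra.
Qed.

Lemma S1_pdot_eq1 x y : S1 x -> S1 y -> pdot x y = 1 -> x = y.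
Proof.
case: x => a b; case: y => c d; rewrite /S1 /pdot /= => Sx Sy xy.
have : (a - c) ^+ 2 + (b - d) ^+ 2 = 0 by lra.
by move/eqP; rewrite paddr_eq0 ?sqr_ge0 // !sqrf_eq0 !subr_eq0 => /andP[/eqP-> /eqP->].
Qed.

Lemma pneg_neq x : S1 x -> pneg x <> x.
Proof.
case: x => a b; rewrite /S1 /pdot /pneg /= => Sx [] ea eb.
have [a0 b0] : a = 0 /\ b = 0 by split; lra.
by rewrite a0 b0 in Sx; lra.
Qed.

Lemma pdot_pcross_decomp x u :
  pscale (pdot u u) x = padd (pscale (pdot x u) u) (pscale (pcross u x) (pmul_i u)).
Proof. by rewrite /pscale /padd /pdot /pcross /pmul_i /=; congr pair; ring. Qed.

Lemma S1_pdot_eq0 x u : S1 x -> S1 u -> pdot x u = 0 ->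
  x = pmul_i u \/ x = pneg (pmul_i u).
Proof.
case: x => a b Sx Su xu; have := pdot_pcross_sqr u (a, b).
rewrite pdotC xu Su Sx expr0n /= add0r mulr1 => /eqP; rewrite sqrf_eq1 => cr.
have := pdot_pcross_decomp (a, b) u; rewrite Su xu.
case/orP: cr => /eqP -> e; [left|right]; move: e;
  rewrite /pscale /padd /pmul_i /pneg /= => -[ea eb]; congr pair; lra.
Qed.

Lemma gdist_self x : S1 x -> gdist x x = 0.
Proof. by rewrite /gdist => ->; exact: acos1. Qed.

Lemma gdist_gt0 x y : S1 x -> S1 y -> x <> y -> 0 < gdist x y.
Proof.
move=> Sx Sy xy; have /andP[xyN1 xy1] := pdot_S1_itv Sx Sy.
rewrite /gdist acos_gt0 // xyN1 lt_neqAle xy1 andbT.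
by apply/eqP => /(S1_pdot_eq1 Sx Sy).
Qed.

Lemma gdist_lt x y e : S1 x -> S1 y -> 0 <= e <= pi ->
  (gdist x y < e) = (cos e < pdot x y).
Proof.
move=> Sx Sy e_itv; have xy_itv := pdot_S1_itv Sx Sy.
have /acos_def[acos_itv acosK] := xy_itv.
by rewrite /gdist -[in RHS]acosK ltr_cos // in_itv.
Qed.

Lemma pi_half_le_gdist x y : S1 x -> S1 y -> (pi / 2 <= gdist x y) = (pdot x y <= 0).
Proof.
move=> Sx Sy; have pi_gt0 := @pi_gt0 R.
by rewrite leNgt gdist_lt ?cos_pihalf -?leNgt //; apply/andP; split; lra.
Qed.

Lemma pcrossxx x : pcross x x = 0.
Proof. by rewrite /pcross mulrC subrr. Qed.

Lemma pnegK x : pneg (pneg x) = x.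
Proof. by rewrite /pneg !opprK; case: x. Qed.

Lemma pmul_iN x : pmul_i (pneg x) = pneg (pmul_i x).
Proof. by []. Qed.

Lemma pnorm_gt0 x : x != (0, 0) -> 0 < pnorm x.
Proof.
case: x => a b ab; rewrite sqrtr_gt0 ltNge; apply: contra ab; rewrite /pdot /= => ab0.
by have [-> ->] : a = 0 /\ b = 0 by split; nra.
Qed.

Definition half_circle_pt v (t : R) : R * R :=
  padd (pscale (Num.sqrt (1 - t ^+ 2)) v) (pscale t (pmul_i v)).

Lemma pdot_half_circle_pt v w t :
  pdot (half_circle_pt v t) w = Num.sqrt (1 - t ^+ 2) * pdot v w + t * pcross v w.
Proof. by rewrite /half_circle_pt /pdot /pcross /padd /pscale /pmul_i /=; ring. Qed.

Lemma S1_half_circle_pt v t : S1 v -> t ^+ 2 <= 1 -> S1 (half_circle_pt v t).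
Proof.
move=> Sv t_le1; have s_sqr : Num.sqrt (1 - t ^+ 2) ^+ 2 = 1 - t ^+ 2.
  by rewrite sqr_sqrtr // subr_ge0.
rewrite /S1 /= (_ : pdot _ _ = (Num.sqrt (1 - t ^+ 2) ^+ 2 + t ^+ 2) * pdot v v).
  by rewrite s_sqr subrK Sv mulr1.
by rewrite /half_circle_pt /pdot /padd /pscale /pmul_i /=; ring.
Qed.

Lemma semicircle_pdot_gt (psi phi t e : R) :
  0 <= psi -> psi ^+ 2 + phi ^+ 2 = 1 -> t ^+ 2 <= 1 -> `|phi - t| < e -> e <= 1 ->
  1 - 3 * e / 2 < Num.sqrt (1 - t ^+ 2) * psi + t * phi.
Proof.
move=> psi_ge0 psi_phi t_le1 phi_t e_le1.
set s := Num.sqrt (1 - t ^+ 2); have s_ge0 : 0 <= s := sqrtr_ge0 _.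
have s_t : s ^+ 2 + t ^+ 2 = 1 by rewrite sqr_sqrtr ?subr_ge0 //; ring.
have gap : 1 - (s * psi + t * phi) = ((s - psi) ^+ 2 + (phi - t) ^+ 2) / 2.
  by apply: (@mulIf _ 2); rewrite ?pnatr_eq0 // mulfVK ?pnatr_eq0 //; nra.
have norm_le1 (z : R) : z ^+ 2 <= 1 -> `|z| <= 1.
  by move=> z1; rewrite -sqrtr_sqr -sqrtr1; exact: ler_wsqrtr.
have sqr_phi_t : `|phi ^+ 2 - t ^+ 2| <= 2 * `|phi - t|.
  rewrite subr_sqr normrM mulrC ler_wpM2r //; apply: le_trans (ler_normD _ _) _.
  by have := norm_le1 phi; have := norm_le1 t; have := sqr_ge0 psi; lra.
have sqr_s_psi : (s - psi) ^+ 2 <= `|phi ^+ 2 - t ^+ 2|.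
  have -> : phi ^+ 2 - t ^+ 2 = s ^+ 2 - psi ^+ 2 by lra.
  rewrite subr_sqr normrM [`|s + psi|]ger0_norm ?addr_ge0 //.
  rewrite -real_normK ?num_real // expr2 ler_wpM2l // ler_norml.
  by apply/andP; split; lra.
have sqr_le_norm : (phi - t) ^+ 2 <= `|phi - t|.
  rewrite -real_normK ?num_real // expr2.
  by have := normr_ge0 (phi - t); nra.
lra.
Qed.

End UnitCircle.

(* No measurability is needed: a nonnegative integral is a supremum over the simple
   functions below the integrand. *)
Lemma ge0_le_integral_nonmeas d (T : measurableType d) (R : realType)
    (mu : {measure set T -> \bar R}) (D : set T) (f1 f2 : T -> \bar R) :
  (forall x, D x -> (0 <= f1 x)%E) -> (forall x, D x -> (f1 x <= f2 x)%E) ->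
  (\int[mu]_(x in D) f1 x <= \int[mu]_(x in D) f2 x)%E.
Proof.
move=> f1_ge0 f12.
have f2_ge0 x : D x -> (0 <= f2 x)%E by move=> Dx; exact: le_trans (f1_ge0 x Dx) (f12 x Dx).
rewrite (ge0_integralE _ f1_ge0) (ge0_integralE _ f2_ge0).
apply: ereal_sup_le => _ [h /= hf1 <-]; exists h => //= x.
apply: le_trans (hf1 x) _; rewrite /patch; case: ifP => // /set_mem; exact: f12.
Qed.

Lemma measurable_inv (R : realType) : measurable_fun [set: R] GRing.inv.
Proof.
have -> : [set: R] = [set x | x != 0] `|` [set 0].
  by apply/seteqP; split => // x _; case: (eqVneq x 0); [right|left].
have mD : measurable [set x : R | x != 0] by apply: open_measurable; exact: open_neq.
apply/(measurable_funU _ mD (measurable_set1 0)); split; last exact: measurable_fun_set1.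
apply: open_continuous_measurable_fun; first exact: open_neq.
by move=> x /set_mem x0; exact: inv_continuous.
Qed.

Section MeasurableComparison.
Context d (T : measurableType d) (R : realType).
Variables (D : set T) (f h : T -> R).
Hypotheses (mD : measurable D) (mf : measurable_fun D f) (mh : measurable_fun D h).

Let mfE : measurable_fun D (EFin \o f). Proof. exact/measurable_EFinP. Qed.
Let mhE : measurable_fun D (EFin \o h). Proof. exact/measurable_EFinP. Qed.

Lemma measurable_ltr_set : measurable (D `&` [set x | f x < h x]).
Proof.
have := measurable_lte mD mfE mhE.
by congr measurable; apply/seteqP; split => x [Dx /=]; rewrite ?lte_fin.
Qed.

Lemma measurable_ler_set : measurable (D `&` [set x | f x <= h x]).
Proof.
have := measurable_lee mD mfE mhE.
by congr measurable; apply/seteqP; split => x [Dx /=]; rewrite ?lee_fin.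
Qed.

End MeasurableComparison.

Lemma ae_le0_integral_eq0 d (T : measurableType d) (R : realType)
    (mu : {measure set T -> \bar R}) (D : set T) (f : T -> R) :
  measurable D -> measurable_fun D f -> {ae mu, forall x, D x -> f x <= 0} ->
  (\int[mu]_(x in D) (f x)%:E = 0)%E -> {ae mu, forall x, D x -> f x = 0}.
Proof.
move=> mD mf f_le0 f_int0; have mfE : measurable_fun D (EFin \o f) by exact/measurable_EFinP.
have pos0 : (\int[mu]_(x in D) (EFin \o f)^\+ x = 0)%E.
  have <- : (\int[mu]_(x in D) `|(EFin \o f)^\+ x| = \int[mu]_(x in D) (EFin \o f)^\+ x)%E.
    by apply: eq_integral => x _; rewrite gee0_abs // funepos_ge0.
  apply/(ae_eq_integral_abs mu mD (measurable_funepos mfE)).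
  by apply: filterS f_le0 => x fx Dx; rewrite /= funeposE max_r // lee_fin fx.
have neg0 : (\int[mu]_(x in D) (EFin \o f)^\- x = 0)%E.
  by move: f_int0; rewrite integralE pos0 sub0e => /eqP; rewrite oppe_eq0 => /eqP.
have : {ae mu, forall x, D x -> ((EFin \o f)^\- x = 0)%E}.
  apply/(ae_eq_integral_abs mu mD (measurable_funeneg mfE)); rewrite -neg0.
  by apply: eq_integral => x _; rewrite gee0_abs // funeneg_ge0.
apply: filterS2 f_le0 => x fx fneg Dx; apply/eqP; rewrite eq_le fx //=.
have : (- (f x)%:E <= (EFin \o f)^\- x)%E by rewrite funenegE le_max lexx.
by rewrite fneg // -EFinN lee_fin oppr_le0.
Qed.

Lemma integral_indic_mul_gt0 d (T : measurableType d) (R : realType)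
    (mu : {measure set T -> \bar R}) (D F : set T) (h : T -> R) :
  measurable D -> measurable F -> F `<=` D -> measurable_fun D h ->
  (0 < mu F)%E -> (forall x, F x -> 0 < h x) ->
  (0 < \int[mu]_(x in D) ((\1_F x : R) * h x)%:E)%E.
Proof.
move=> mD mF FD mh muF h_gt0.
have f_ge0 x : (0 <= ((\1_F x : R) * h x)%:E)%E.
  rewrite lee_fin indicE; case: (boolP (x \in F)) => [/set_mem/h_gt0/ltW|_].
    by rewrite mul1r.
  by rewrite mul0r.
rewrite lt0e integral_ge0 ?andbT //; apply/negP => /eqP int0.
have mf : measurable_fun D (fun x => ((\1_F x : R) * h x)%:E).
  by apply/measurable_EFinP; apply: measurable_funM => //; exact: measurable_indic.
have [N [mN N0 fN]] : {ae mu, forall x, D x -> ((\1_F x : R) * h x)%:E = 0%E}.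
  apply/(ae_eq_integral_abs mu mD mf); rewrite -[RHS]int0.
  by apply: eq_integral => x _; rewrite gee0_abs.
have FN : F `<=` N.
  move=> x Fx; apply: fN => /= /(_ (FD _ Fx)); rewrite indicE mem_set // mul1r.
  by move=> [] /eqP; rewrite gt_eqF // h_gt0.
by move: muF; rewrite (subset_measure0 mF mN FN N0) ltxx.
Qed.

(* The witness is the supremum of the levels below which [f] is negligible on [Q]. *)
Lemma exists_essential_value d (T : measurableType d) (R : realType)
    (mu : {measure set T -> \bar R}) (Q : set T) (f : T -> R) (a b : R) :
  measurable Q -> measurable_fun Q f -> (0 < mu Q)%E ->
  (forall s, Q s -> a <= f s <= b) ->
  exists2 t, a <= t <= b &
    forall e, 0 < e -> (0 < mu (Q `&` f @^-1` `](t - e)%R, (t + e)%R[))%E.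
Proof.
move=> mQ mf muQ f_ab.
pose below t := Q `&` f @^-1` `]-oo, t[.
have mbelow t : measurable (below t) by exact: mf.
pose S := [set t | mu (below t) = 0%E].
have Sa : S a.
  rewrite /S /= (_ : below a = set0) ?measure0 //; apply/seteqP; split => // s [Qs].
  by rewrite /= in_itv /= ltNge; have /andP[-> _] := f_ab s Qs.
have S_le_b t : S t -> t <= b.
  rewrite /S leNgt => /= St; apply/negP => bt; move: muQ.
  rewrite (_ : Q = below t) ?St ?ltxx //; apply/seteqP; split => [s Qs|s []//].
  by split; rewrite //= in_itv /=; have /andP[_ /le_lt_trans->] := f_ab s Qs.
have hasS : has_sup S by split; [exists a | exists b => t /S_le_b].
exists (sup S); first by rewrite sup_upper_bound //= ge_sup //; exists a.
move=> e e_gt0; have [t St supS_lt] := sup_adherent e_gt0 hasS.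
have t_le := sup_upper_bound hasS St.
have below_t0 : mu (below t) = 0%E := St.
have notS : ~ S (sup S + e) by move=> /(sup_upper_bound hasS); lra.
have mE : measurable (Q `&` f @^-1` `]sup S - e, sup S + e[) by exact: mf.
rewrite lt0e measure_ge0 andbT; apply/negP => /eqP E0; apply: notS.
have sub : below (sup S + e) `<=` below t `|` (Q `&` f @^-1` `]sup S - e, sup S + e[).
  move=> s [Qs]; rewrite /= !in_itv /= => fs.
  by have [ft|tf] := ltP (f s) t; [left|right]; split;
    rewrite //= ?in_itv /= ?fs ?andbT //; lra.
apply: (subset_measure0 (mbelow _) (measurableU _ _ (mbelow t) mE) sub).
exact: etrans (measureU0 (mbelow t) mE E0) below_t0.
Qed.

Lemma measurable_set1_pair (R : realType) (p : R * R) : measurable [set p].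
Proof.
rewrite (_ : [set p] = [set p.1] `*` [set p.2]); last first.
  by apply/seteqP; split => [q /= -> //|[a b] /= [-> ->]]; case: p.
by apply: measurableX; exact: measurable_set1.
Qed.

Lemma le_length_measure (R : realType) (g : R -> R * R) (A B : set (R * R)) :
  A `<=` B -> (length_measure g A <= length_measure g B)%E.
Proof.
move=> AB; apply: ge0_le_integral_nonmeas => s _; rewrite lee_fin.
  by rewrite mulr_ge0 ?sqrtr_ge0.
rewrite ler_wpM2r ?sqrtr_ge0 // !indicE.
by case: (boolP (_ \in A)) => [/set_mem/AB/mem_set -> //|_]; rewrite ler0n.
Qed.

Definition far_set (R : realType) (mu : set (R * R) -> \bar R) : set (R * R) :=
  [set x | S1 x /\ forall y, supp mu y -> pi / 2 <= gdist x y].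

Section DegenerateMeasure.
Variables (R : realType) (mu : set (R * R) -> \bar R) (r : R) (x : R * R).
Hypotheses (le_mu : forall A B, A `<=` B -> (mu A <= mu B)%E)
  (r_gt0 : 0 < r) (Sx : S1 x) (mu_deg : is_degenerate_measure mu r x).

Lemma degenerate_measure_set1 : mu [set x] = r%:E.
Proof.
rewrite mu_deg; last exact: measurable_set1_pair.
by rewrite /indic mem_set // memNset ?mulr0 ?addr0 ?mulr1 //=; exact: pneg_neq.
Qed.

Lemma degenerate_measure_set1N : mu [set pneg x] = r%:E.
Proof.
rewrite mu_deg; last exact: measurable_set1_pair.
rewrite /indic [pneg x \in _]mem_set // memNset ?mulr0 ?add0r ?mulr1 //=.
by move=> /esym; exact: pneg_neq.
Qed.

Lemma degenerate_measure_setC : mu (~` [set x; pneg x]) = 0%E.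
Proof.
rewrite mu_deg; last by apply: measurableC; apply: measurableU; exact: measurable_set1_pair.
by rewrite /indic !memNset ?mulr0 ?addr0 //= => -[]; by [left|right].
Qed.

Lemma supp_degenerate y : supp mu y <-> y = x \/ y = pneg x.
Proof.
have SNx := S1N Sx; split.
- move=> [Sy y_supp]; apply: contrapT => /not_orP[yx yNx].
  pose e := Num.min (gdist y x) (gdist y (pneg x)).
  have e_gt0 : 0 < e by rewrite lt_min !gdist_gt0.
  have := y_supp e e_gt0; apply/negP; rewrite -leNgt -degenerate_measure_setC.
  by apply: le_mu => z [_ yz] [] zx; move: yz; rewrite zx /e lt_min ltxx ?andbF.
- have ball_ge z : S1 z -> forall e, 0 < e ->
      (mu [set z] <= mu [set w | S1 w /\ (gdist z w < e)%R])%E.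
    by move=> Sz e e_gt0; apply: le_mu => w -> /=; rewrite gdist_self.
  move=> [->|->]; split => // e e_gt0; apply: lt_le_trans (ball_ge _ _ e e_gt0) => //.
    by rewrite degenerate_measure_set1 lte_fin.
  by rewrite degenerate_measure_set1N lte_fin.
Qed.

Lemma far_set_degenerate : far_set mu = [set pmul_i x; pneg (pmul_i x)].
Proof.
have [Six SNx] := (S1_mul_i Sx, S1N Sx).
apply/seteqP; split => [z [Sz z_far]|z].
  have := z_far x (proj2 (supp_degenerate x) (or_introl erefl)).
  have := z_far (pneg x) (proj2 (supp_degenerate _) (or_intror erefl)).
  rewrite !pi_half_le_gdist // pdotN oppr_le0 => zx1 zx2.
  have zx : pdot z x = 0 by apply/eqP; rewrite eq_le zx1 zx2.
  by have [->|->] := S1_pdot_eq0 Sz Sx zx; [left|right].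
have perp_far w : S1 w -> pdot w x = 0 -> far_set mu w.
  move=> Sw wx; split=> // y /supp_degenerate[] ->;
    by rewrite pi_half_le_gdist // ?pdotN wx ?oppr0.
move=> [] ->; first by apply: perp_far => //; exact: pdot_mul_i.
apply: perp_far; first exact: S1N.
by rewrite pdotC pdotN pdotC pdot_mul_i oppr0.
Qed.

Lemma degenerate_far_set_eq0 (nu : set (R * R) -> \bar R) :
  (exists2 y, supp nu y & 0 < pdot y x) ->
  (exists2 y, supp nu y & 0 < pdot y (pneg x)) ->
  mu (far_set nu) = 0%E.
Proof.
move=> [y1 y1_supp y1x] [y2 y2_supp y2x].
have mu_ge0 A : (0 <= mu A)%E.
  by have := le_mu (sub0set A); rewrite mu_deg // /indic !in_set0 mulr0 addr0.
apply/eqP; rewrite eq_le mu_ge0 andbT -degenerate_measure_setC.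
apply: le_mu => z [Sz z_far] [] zx; rewrite {}zx in Sz z_far.
- have := z_far y1 y1_supp; rewrite pi_half_le_gdist //; last by case: y1_supp.
  by rewrite pdotC leNgt y1x.
- have := z_far y2 y2_supp; rewrite pi_half_le_gdist ?S1N //; last by case: y2_supp.
  by rewrite pdotC leNgt y2x.
Qed.

End DegenerateMeasure.

(* [measurable] on [R] is found through a canonical structure that is only convertible,
   not syntactically equal, to the one [lebesgue_measure] is defined on; lemmas generic
   in the measure hence receive [mu] explicitly. *)
Section TangentAnalysis.
Variables (R : realType) (g : R -> R * R) (v : R * R).
Local Notation mu := (@lebesgue_measure R).
Hypotheses (g1_int : mu.-integrable (@period R) (fun s => ((g s).1)%:E))
  (g2_int : mu.-integrable (@period R) (fun s => ((g s).2)%:E)) (Sv : S1 v).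

Let speed s := pnorm (g s).
Let gdot s := pdot (g s) v.
Let gcross s := pcross v (g s).
Let tangent_coord s := gcross s / speed s.

Let mperiod : measurable (@period R). Proof. exact: measurable_itv. Qed.

Let period_gt0 : (0 < mu (@period R))%E.
Proof.
have pi2_gt0 : (0 : R) < 2 * pi by rewrite mulr_gt0 ?pi_gt0.
by rewrite /period lebesgue_measure_itv /= lte_fin pi2_gt0 sube0 lte_fin.
Qed.

Let mg1 : measurable_fun (@period R) (fun s => (g s).1).
Proof. by apply/measurable_EFinP; exact: (measurable_int _ g1_int). Qed.
Let mg2 : measurable_fun (@period R) (fun s => (g s).2).
Proof. by apply/measurable_EFinP; exact: (measurable_int _ g2_int). Qed.

Let measurable_speed : measurable_fun (@period R) speed.
Proof.
apply: measurableT_comp (continuous_measurable_fun (@sqrt_continuous R)) _.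
by apply: measurable_funD; apply: measurable_funM.
Qed.

Let measurable_gdot : measurable_fun (@period R) gdot.
Proof. by apply: measurable_funD; apply: measurable_funM. Qed.

Let measurable_gcross : measurable_fun (@period R) gcross.
Proof. by apply: measurable_funB; apply: measurable_funM. Qed.

Let cone d := @period R `&` [set s | 0 < gdot s] `&` [set s | d * speed s <= gdot s].

Let measurable_cone d : measurable (cone d).
Proof.
have mpos : measurable (@period R `&` [set s | 0 < gdot s]).
  exact: measurable_ltr_set mperiod (measurable_cst _) measurable_gdot.
apply: measurable_ler_set mpos _ _.
  apply: (measurable_funS mperiod); first by move=> s [].
  by apply: measurable_funM => //; exact: measurable_cst.
by apply: (measurable_funS mperiod) measurable_gdot => s [].
Qed.

Let speed_ge0 s : 0 <= speed s. Proof. exact: sqrtr_ge0. Qed.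

Let speed_sqr s : speed s ^+ 2 = pdot (g s) (g s).
Proof. by rewrite sqr_sqrtr // /pdot -!expr2 addr_ge0 ?sqr_ge0. Qed.

Lemma gdot_gcross_sqr s : gdot s ^+ 2 + gcross s ^+ 2 = speed s ^+ 2.
Proof.
have := pdot_pcross_sqr (g s) v; rewrite Sv mulr1 speed_sqr => <-.
by rewrite /gdot /gcross /pcross; ring.
Qed.

Lemma gdot_le_speed s : gdot s <= speed s.
Proof.
apply: le_trans (ler_norm _) _; rewrite -sqrtr_sqr -(ger0_norm (speed_ge0 s)) -sqrtr_sqr.
by apply: ler_wsqrtr; rewrite -gdot_gcross_sqr lerDl sqr_ge0.
Qed.

Lemma unit_tangent_S1 s : 0 < speed s -> S1 (unit_tangent g s).
Proof.
move=> speed_gt0; rewrite /S1 /= (_ : pdot _ _ = (speed s)^-1 ^+ 2 * pdot (g s) (g s)).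
  by rewrite -speed_sqr exprVn mulVf // expf_neq0 // gt_eqF.
by rewrite /unit_tangent /speed /pdot /pscale /=; ring.
Qed.

Lemma pdot_unit_tangent s : pdot (unit_tangent g s) v = gdot s / speed s.
Proof. by rewrite /unit_tangent /gdot /speed /pdot /pscale /=; ring. Qed.

Lemma pcross_unit_tangent s : pcross v (unit_tangent g s) = tangent_coord s.
Proof. by rewrite /unit_tangent /tangent_coord /gcross /speed /pcross /pscale /=; ring. Qed.

Lemma unit_tangent_coord_sqr s : 0 < speed s ->
  (gdot s / speed s) ^+ 2 + tangent_coord s ^+ 2 = 1.
Proof.
move=> speed_gt0; rewrite /tangent_coord !expr_div_n -mulrDl gdot_gcross_sqr divff //.
by rewrite expf_neq0 // gt_eqF.
Qed.

Let measurable_tangent_coord (Q : set R) :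
  Q `<=` @period R -> measurable_fun Q tangent_coord.
Proof.
move=> QP; apply: measurable_funS QP _ => //; apply: measurable_funM => //.
exact: measurableT_comp (@measurable_inv R) measurable_speed.
Qed.

Lemma length_measure_gt0 (E : set R) (A : set (R * R)) :
  measurable E -> E `<=` @period R -> (0 < mu E)%E ->
  {ae mu, forall s, E s -> 0 < speed s /\ A (unit_tangent g s)} ->
  (0 < length_measure g A)%E.
Proof.
move=> mE EP muE [N [mN N0 EN]]; pose F := E `\` N.
have mF : measurable F by exact: measurableD.
have F_spec s : F s -> 0 < speed s /\ A (unit_tangent g s).
  by move=> [Es nNs]; apply: contrapT => nspec; apply: nNs; apply: EN => /= /(_ Es).
have muF : (0 < mu F)%E.
  have : (mu E <= mu (F `|` N))%E.
    apply: le_measure; rewrite ?inE; [exact: mE|exact: measurableU|].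
    by move=> s Es; have [Ns|nNs] := pselect (N s); [right|left].
  move: (measureU0 (mu := mu) mF mN N0) => /eqP; rewrite eq_le => /andP[le_FN _] le_EFN.
  exact: lt_le_trans muE (le_trans le_EFN le_FN).
apply: lt_le_trans (integral_indic_mul_gt0 (mu := mu) mperiod mF (fun s Fs => EP s Fs.1)
  measurable_speed muF (fun s Fs => (F_spec s Fs).1)) _.
apply: ge0_le_integral_nonmeas => s _; rewrite lee_fin !indicE.
  by case: (s \in F); rewrite ?mul1r ?mul0r.
rewrite ler_wpM2r //; case: (boolP (s \in F)) => [/set_mem/F_spec[_ /mem_set -> //]|_].
by rewrite ler0n.
Qed.

Lemma supp_half_circle_pt (Q : set R) (t : R) :
  measurable Q -> Q `<=` @period R -> (forall s, Q s -> 0 < gdot s) -> t ^+ 2 <= 1 ->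
  (forall e, 0 < e ->
    (0 < mu (Q `&` tangent_coord @^-1` `](t - e)%R, (t + e)%R[))%E) ->
  supp (length_measure g) (half_circle_pt v t).
Proof.
move=> mQ QP Q_pos t_le1 t_ess; split; first exact: S1_half_circle_pt.
move=> e e_gt0; pose e' := Num.min e pi.
have e'_gt0 : 0 < e' by rewrite lt_min e_gt0 pi_gt0.
have e'_le_pi : e' <= pi by rewrite ge_min lexx orbT.
have cos_lt1 : cos e' < 1.
  have e'_itv : e' \in `[0, pi] by rewrite in_itv /= (ltW e'_gt0) e'_le_pi.
  have zero_itv : (0 : R) \in `[0, pi] by rewrite in_itv /= lexx pi_ge0.
  by rewrite -cos0 (ltr_cos zero_itv e'_itv).
pose eta := Num.min 1 ((1 - cos e') / 2).
have eta_gt0 : 0 < eta by rewrite lt_min ltr01 divr_gt0 // subr_gt0.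
have [eta_le1 eta_le] : eta <= 1 /\ eta <= (1 - cos e') / 2.
  by split; rewrite ge_min lexx ?orbT.
apply: (length_measure_gt0 _ _ (t_ess eta eta_gt0)); first exact: measurable_tangent_coord.
  by move=> s [/QP].
apply: aeW => s [Qs]; rewrite /= in_itv /= -ltr_distl => near_t.
have speed_gt0 : 0 < speed s := lt_le_trans (Q_pos s Qs) (gdot_le_speed s).
split=> //; split; first exact: unit_tangent_S1.
apply: (@lt_le_trans _ _ e'); last by rewrite ge_min lexx.
rewrite gdist_lt; last 3 first.
- exact: S1_half_circle_pt.
- exact: unit_tangent_S1.
- by rewrite (ltW e'_gt0) e'_le_pi.
rewrite pdot_half_circle_pt pdotC pdot_unit_tangent pcross_unit_tangent.
have := semicircle_pdot_gt _ (unit_tangent_coord_sqr speed_gt0) t_le1 near_t eta_le1.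
have : 0 <= gdot s / speed s by rewrite divr_ge0 // ltW // Q_pos.
lra.
Qed.

Lemma supp_pdot_gt0_of_cone (d : R) : 0 < d -> (0 < mu (cone d))%E ->
  exists2 y, supp (length_measure g) y & 0 < pdot y v.
Proof.
move=> d_gt0; set Q := cone d => muQ; have mQ : measurable Q := measurable_cone d.
have QP : Q `<=` @period R by move=> s [[]].
have Q_cone s : Q s -> 0 < gdot s /\ d * speed s <= gdot s by move=> [[_ ?] ?].
have /set0P[s0 Qs0] : Q != set0 by apply: contraTneq muQ => ->; rewrite measure0 ltxx.
have speed_gt0 s : Q s -> 0 < speed s.
  by move=> /Q_cone[gdot_gt0 _]; exact: lt_le_trans gdot_gt0 (gdot_le_speed s).
have d_le1 : d <= 1.
  rewrite -(ler_pM2r (speed_gt0 _ Qs0)) mul1r.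
  by have := (Q_cone _ Qs0).2; have := gdot_le_speed s0; lra.
pose K := Num.sqrt (1 - d ^+ 2).
have K_sqr : K ^+ 2 = 1 - d ^+ 2 by rewrite sqr_sqrtr // subr_ge0 expr_le1 // ltW.
have coord_bnd s : Q s -> - K <= tangent_coord s <= K.
  move=> Qs; rewrite -ler_norml -sqrtr_sqr; apply: ler_wsqrtr.
  have [_ d_le] := Q_cone s Qs; have sp := speed_gt0 s Qs.
  have := unit_tangent_coord_sqr sp; have : d <= gdot s / speed s by rewrite ler_pdivlMr.
  nra.
have [t /andP[Kt tK] t_ess] :=
  exists_essential_value (mu := mu) mQ (measurable_tangent_coord QP) muQ coord_bnd.
have t_sqr : t ^+ 2 <= 1 - d ^+ 2 by rewrite -K_sqr; have := sqrtr_ge0 (1 - d ^+ 2); nra.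
have d_sqr_gt0 : 0 < d ^+ 2 by rewrite exprn_gt0.
exists (half_circle_pt v t).
  by apply: (supp_half_circle_pt mQ QP _ _ t_ess); [move=> s /Q_cone[] | lra].
by rewrite pdot_half_circle_pt Sv pcrossxx mulr1 mulr0 addr0 sqrtr_gt0; lra.
Qed.

Lemma exists_cone_gt0 :
  (\int[mu]_(s in @period R) (gdot s)%:E = 0)%E -> {ae mu, forall s, g s != (0, 0)} ->
  length_measure g [set pmul_i v; pneg (pmul_i v)] = 0%E ->
  exists2 d, 0 < d & (0 < mu (cone d))%E.
Proof.
move=> gdot_int0 g_neq0 null_iv; apply: contrapT => no_cone.
have cone_null n : {ae mu, forall s, ~ cone n.+1%:R^-1 s}.
  exists (cone n.+1%:R^-1); split; [exact: measurable_cone| |by move=> s /= /contrapT].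
  apply/eqP; rewrite eq_le measure_ge0 andbT leNgt; apply/negP => pos.
  by apply: no_cone; exists n.+1%:R^-1; rewrite ?invr_gt0.
have gdot_le0 : {ae mu, forall s, @period R s -> gdot s <= 0}.
  apply: filterS (ae_foralln cone_null) => s out Ps; rewrite leNgt; apply/negP => pos.
  have speed_gt0 := lt_le_trans pos (gdot_le_speed s).
  apply: (out (Num.truncn (speed s / gdot s))); split; [split|] => //=.
  rewrite ler_pdivrMl ?ltr0Sn //; apply: ltW; rewrite -ltr_pdivrMr //.
  exact: truncnS_gt.
have gdot_eq0 := ae_le0_integral_eq0 (mu := mu) mperiod measurable_gdot gdot_le0 gdot_int0.
have : (0 < length_measure g [set pmul_i v; pneg (pmul_i v)])%E.
  apply: (length_measure_gt0 mperiod (@subset_refl _ _) period_gt0).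
  apply: filterS2 gdot_eq0 g_neq0 => s gdot0 g_s Ps.
  have speed_gt0 : 0 < speed s := pnorm_gt0 g_s.
  split=> //; apply: S1_pdot_eq0 (unit_tangent_S1 speed_gt0) Sv _.
  by rewrite pdot_unit_tangent gdot0 // mul0r.
by rewrite null_iv ltxx.
Qed.

Lemma supp_pdot_gt0 :
  (\int[mu]_(s in @period R) (gdot s)%:E = 0)%E -> {ae mu, forall s, g s != (0, 0)} ->
  length_measure g [set pmul_i v; pneg (pmul_i v)] = 0%E ->
  exists2 y, supp (length_measure g) y & 0 < pdot y v.
Proof.
by move=> gdot_int0 g_neq0 null_iv; have [d] := exists_cone_gt0 gdot_int0 g_neq0 null_iv;
  exact: supp_pdot_gt0_of_cone.
Qed.

End TangentAnalysis.

Lemma W11_loop_integral_eq0 (R : realType) (c g : R -> R * R) : W11_loop c g ->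
  (\int[lebesgue_measure]_(s in @period R) ((g s).1)%:E = 0)%E /\
  (\int[lebesgue_measure]_(s in @period R) ((g s).2)%:E = 0)%E.
Proof.
move=> [c_per [_ [g1_int [g2_int c_int]]]].
have mP : measurable (@period R : set (measurableTypeR R)) by exact: measurable_itv.
have pi2_itv : 0 <= (2 * pi : R) <= 2 * pi by rewrite lexx andbT mulr_ge0 ?pi_ge0.
have := c_int _ pi2_itv; rewrite -[in c (2 * pi)](add0r (2 * pi)) c_per.
case: (c 0) => a b; rewrite /padd /= => -[ea eb].
have int1 : \int[lebesgue_measure]_(s in `[0, 2 * pi]%classic) (g s).1 = 0 by lra.
have int2 : \int[lebesgue_measure]_(s in `[0, 2 * pi]%classic) (g s).2 = 0 by lra.
split.
  by rewrite -(fineK (integrable_fin_num mP g1_int)); congr EFin; exact: int1.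
by rewrite -(fineK (integrable_fin_num mP g2_int)); congr EFin; exact: int2.
Qed.

Lemma W11_loop_integral_pdot_eq0 (R : realType) (c g : R -> R * R) (v : R * R) :
  W11_loop c g -> (\int[lebesgue_measure]_(s in @period R) (pdot (g s) v)%:E = 0)%E.
Proof.
move=> loop; have [_ [_ [g1_int [g2_int _]]]] := loop.
have [int1 int2] := W11_loop_integral_eq0 loop.
have mP : measurable (@period R : set (measurableTypeR R)) by exact: measurable_itv.
have -> : (\int[lebesgue_measure]_(s in @period R) (pdot (g s) v)%:E =
    \int[lebesgue_measure]_(s in @period R)
      (((g s).1)%:E * (v.1)%:E + ((g s).2)%:E * (v.2)%:E))%E.
  by apply: eq_integral => s _; rewrite /pdot EFinD !EFinM.
rewrite integralD //; try exact: integrableZr.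
by rewrite !integralZr // int1 int2 !mul0e adde0.
Qed.

Lemma W11_loop_supp_pdot_gt0 (R : realType) (c g : R -> R * R) (v : R * R) :
  W11_loop c g -> {ae lebesgue_measure, forall s, g s != (0, 0)} -> S1 v ->
  length_measure g [set pmul_i v; pneg (pmul_i v)] = 0%E ->
  exists2 y, supp (length_measure g) y & 0 < pdot y v.
Proof.
move=> loop g_neq0 Sv; have [_ [_ [g1_int [g2_int _]]]] := loop.
exact: supp_pdot_gt0 g1_int g2_int Sv (W11_loop_integral_pdot_eq0 v loop) g_neq0.
Qed.

Lemma degenerate_weakly_admissibleP (R : realType) (mu nu : set (R * R) -> \bar R)
    (r : R) (x : R * R) :
  (forall A B, A `<=` B -> (mu A <= mu B)%E) -> 0 < r -> S1 x ->
  is_degenerate_measure mu r x ->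
  (forall v, S1 v -> nu [set pmul_i v; pneg (pmul_i v)] = 0%E ->
     exists2 y, supp nu y & 0 < pdot y v) ->
  (nu (far_set mu) = 0%E /\ mu (far_set nu) = 0%E <->
   nu [set pmul_i x; pneg (pmul_i x)] = 0%E).
Proof.
move=> le_mu r_gt0 Sx mu_deg nu_supp; rewrite (far_set_degenerate le_mu r_gt0 Sx mu_deg).
split=> [[] //|nu_null]; split=> //.
apply: (degenerate_far_set_eq0 le_mu mu_deg); first exact: nu_supp Sx nu_null.
by apply: nu_supp (S1N Sx) _; rewrite pmul_iN pnegK setUC.
Qed.

Theorem corollary3p3 (R : realType) (c g : bool -> R -> (R * R)%type)
  (j : bool) (r : R) (xj : (R * R)%type) :
  convex_loop (c false) (g false) -> convex_loop (c true) (g true) ->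
  0 < r -> S1 xj ->
  is_degenerate_measure (length_measure (g j)) r xj ->
  (weakly_admissible (length_measure (g false)) (length_measure (g true)) <->
   length_measure (g (~~ j)) [set pmul_i xj; pneg (pmul_i xj)] = 0%E).
Proof.
move=> loop0 loop1 r_gt0 Sx mu_deg.
have supp_pos b v : S1 v -> length_measure (g b) [set pmul_i v; pneg (pmul_i v)] = 0%E ->
    exists2 y, supp (length_measure (g b)) y & 0 < pdot y v.
  have [loop [g_neq0 _]] : convex_loop (c b) (g b) by case: b.
  exact: W11_loop_supp_pdot_gt0 loop g_neq0.
rewrite /weakly_admissible; case: j mu_deg => mu_deg /=.
  exact: degenerate_weakly_admissibleP (le_length_measure (g true)) r_gt0 Sx mu_deg
    (supp_pos false).
rewrite and_comm.
exact: degenerate_weakly_admissibleP (le_length_measure (g false)) r_gt0 Sx mu_deg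
  (supp_pos true).
Qed.
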